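(* There exists $\theta_0\in(0,\pi/4)$, depending only on $\alpha$, such that for every $\theta\in(0,\theta_0)$ there exists $a_0(\theta)\ge1$ such that for every $a>a_0(\theta)$ and every $b\in(0,1)$ the following holds: if $p,q\in\mathbb H$ satisfy $p\notin B(q,r_q)$ and $q\notin B(p,r_p)$, then at most one of $p,q$ belongs to $\mathcal P(a,b,\theta)$.
   Context: $\mathbb H=\mathbb R^3$, $p=(x_p,y_p,z_p)$, group law $(x,y,z)\cdot(x',y',z')=(x+x',y+y',z+z'+\tfrac12(xy'-yx'))$, dilations $\delta_\lambda(x,y,z)=(\lambda x,\lambda y,\lambda^2z)$. Fix $\alpha>0$ such that $d_\alpha(p,q)=\inf\{r>0:\delta_{1/r}(p^{-1}\cdot q)\in B_\alpha\}$ is a distance, $B_\alpha$ the closed Euclidean ball of radius $\alpha$ at $0$. $B(p,r)=\{q:d_\alpha(q,p)\le r\}$, $r_p=d_\alpha(0,p)$. $\mathcal P(a,b,\theta)=\{p: x_p>a,\ |z_p|<b,\ |y_p|<x_p\tan\theta\}$. *)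

From Stdlib Require Import Reals Lra ClassicalEpsilon.
Open Scope R_scope.

Record H := mkH { xc : R; yc : R; zc : R }.

Definition hmul (p q : H) : H :=
  mkH (xc p + xc q) (yc p + yc q)
      (zc p + zc q + / 2 * (xc p * yc q - yc p * xc q)).

Definition hinv (p : H) : H := mkH (- xc p) (- yc p) (- zc p).

Definition h0 : H := mkH 0 0 0.

Definition dil (l : R) (p : H) : H := mkH (l * xc p) (l * yc p) (l ^ 2 * zc p).

Definition in_Balpha (alpha : R) (p : H) : Prop :=
  xc p ^ 2 + yc p ^ 2 + zc p ^ 2 <= alpha ^ 2.

Definition is_inf (S : R -> Prop) (m : R) : Prop :=
  (forall r, S r -> m <= r) /\ (forall m', (forall r, S r -> m' <= r) -> m' <= m).

(* the infimum (chosen classically; the set below is nonempty and bounded below by 0) *)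
Definition Rinf (S : R -> Prop) : R :=
  epsilon (inhabits 0) (fun m => is_inf S m).

Definition d_alpha (alpha : R) (p q : H) : R :=
  Rinf (fun r => 0 < r /\ in_Balpha alpha (dil (/ r) (hmul (hinv p) q))).

Definition is_distance (d : H -> H -> R) : Prop :=
  (forall p q, 0 <= d p q) /\
  (forall p q, d p q = 0 <-> p = q) /\
  (forall p q, d p q = d q p) /\
  (forall p q s, d p s <= d p q + d q s).

Definition in_ball (alpha : R) (p : H) (r : R) (q : H) : Prop :=
  d_alpha alpha q p <= r.

Definition r_pt (alpha : R) (p : H) : R := d_alpha alpha h0 p.

Definition in_P (a b theta : R) (p : H) : Prop :=
  xc p > a /\ Rabs (zc p) < b /\ Rabs (yc p) < xc p * tan theta.

(* If [p] and [q] lie far out in a thin cone around the positive [x]-axis,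
   with [x_p <= x_q], then every radius [r] with [delta_(1/r) q] in [B_alpha]
   also has [delta_(1/r) (p^-1 q)] in [B_alpha]: left translation by [p^-1]
   lowers the [x]-coordinate by [x_p], which outweighs the error made in the
   [y]-coordinate (the cone is thin) and in the [z]-coordinate (the shear term
   is [O(x_p x_q tan theta)], and [r] is at least of order [x_q / alpha]).
   Hence [d(p, q) <= d(0, q) = r_q], i.e. [p] lies in [B(q, r_q)]. *)

From Stdlib Require Import Reals Lra Psatz ClassicalEpsilon.
Open Scope R_scope.

Lemma Rinf_is_inf (S : R -> Prop) :
  (forall r, S r -> 0 < r) -> (exists r, S r) -> is_inf S (Rinf S).
Proof.
  intros Hpos [r0 Hr0]. unfold Rinf. apply epsilon_spec.
  destruct (completeness (fun x => S (- x))) as [m [Hub Hlub]].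
  - exists 0. intros x Hx. apply Hpos in Hx. lra.
  - exists (- r0). rewrite Ropp_involutive. exact Hr0.
  - exists (- m). split.
    + intros r Hr.
      assert (- r <= m) by (apply Hub; rewrite Ropp_involutive; exact Hr).
      lra.
    + intros m' Hm'.
      assert (m <= - m') by (apply Hlub; intros x Hx; apply Hm' in Hx; lra).
      lra.
Qed.

Lemma Rinf_le_Rinf (S T : R -> Prop) :
  (forall r, T r -> 0 < r) -> (exists r, S r) -> (forall r, S r -> T r) ->
  Rinf T <= Rinf S.
Proof.
  intros HposT [r0 Hr0] HST.
  assert (HposS : forall r, S r -> 0 < r) by auto.
  destruct (Rinf_is_inf S HposS (ex_intro _ r0 Hr0)) as [_ HglbS].
  destruct (Rinf_is_inf T HposT (ex_intro _ r0 (HST r0 Hr0))) as [HlbT _].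
  apply HglbS. intros r Hr. apply HlbT, HST, Hr.
Qed.

Lemma Rabs_le_inv (u c : R) : Rabs u <= c -> - c <= u <= c.
Proof.
  intros Hu. pose proof (Rle_abs u). pose proof (Rle_abs (- u)).
  rewrite Rabs_Ropp in *. lra.
Qed.

Lemma hmul_hinv (p q : H) :
  hmul (hinv p) q =
  mkH (xc q - xc p) (yc q - yc p)
      (zc q - zc p - / 2 * (xc p * yc q - yc p * xc q)).
Proof. unfold hmul, hinv; cbn; f_equal; ring. Qed.

Lemma hmul_hinv_h0 (q : H) : hmul (hinv h0) q = q.
Proof. destruct q; unfold hmul, hinv, h0; cbn; f_equal; ring. Qed.

Lemma in_Balpha_dil_exists (alpha : R) (p : H) :
  0 < alpha -> exists r, 0 < r /\ in_Balpha alpha (dil (/ r) p).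
Proof.
  intros Halpha. destruct p as [x y z]. unfold in_Balpha, dil; cbn.
  set (N := x ^ 2 + y ^ 2 + z ^ 2).
  assert (HN : 0 <= N) by (unfold N; nra).
  assert (Ha2 : 0 < alpha ^ 2) by nra.
  set (r := 1 + N / alpha ^ 2).
  assert (Hr : 1 <= r).
  { unfold r. assert (0 <= N / alpha ^ 2) by (apply Rmult_le_pos; [lra | left; apply Rinv_0_lt_compat; lra]). lra. }
  exists r. split; [lra|].
  set (s := / r).
  assert (Hs : 0 < s) by (apply Rinv_0_lt_compat; lra).
  assert (Hsr : s * r = 1) by (unfold s; field; lra).
  assert (Hs1 : s <= 1) by nra.
  (* since [s <= 1], the [z]-term scales at least as fast as the others *)
  assert (Hsq : (s * x) ^ 2 + (s * y) ^ 2 + (s ^ 2 * z) ^ 2 <= s * N).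
  { assert (s ^ 4 * z ^ 2 <= s ^ 2 * z ^ 2).
    { assert (s ^ 2 <= 1) by nra.
      replace (s ^ 4 * z ^ 2) with (s ^ 2 * (s ^ 2 * z ^ 2)) by ring.
      assert (0 <= s ^ 2 * z ^ 2) by nra. nra. }
    assert (s ^ 2 * N <= s * N).
    { replace (s ^ 2 * N) with (s * (s * N)) by ring.
      assert (0 <= s * N) by (apply Rmult_le_pos; lra). nra. }
    unfold N in *.
    replace ((s * x) ^ 2 + (s * y) ^ 2 + (s ^ 2 * z) ^ 2)
      with (s ^ 2 * (x ^ 2 + y ^ 2) + s ^ 4 * z ^ 2) by ring.
    nra. }
  assert (HsN : s * N <= alpha ^ 2).
  { assert (HrN : N <= alpha ^ 2 * r) by (unfold r; field_simplify; lra).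
    nra. }
  lra.
Qed.

Section cone_estimate.

Variables alpha t x X yp yq zp zq s : R.

Hypotheses (Halpha : 0 < alpha) (Ht : 0 < t)
  (Hslope : t * (2 * (1 + alpha)) <= 1)
  (Hx : 6 * (1 + alpha) <= x) (HxX : x <= X)
  (Hyp : Rabs yp <= x * t) (Hyq : Rabs yq <= X * t)
  (Hzp : Rabs zp <= 1) (Hzq : Rabs zq <= 1).

Let shear := zq - zp - / 2 * (x * yq - yp * X).

Lemma cone_shift_x_sq : (X - x) ^ 2 <= X ^ 2 - x * X.
Proof. assert (0 <= x * (X - x)) by (apply Rmult_le_pos; lra). nra. Qed.

Lemma cone_shift_y_sq : (yq - yp) ^ 2 <= yq ^ 2 + 3 * (x * X * t ^ 2).
Proof.
  assert (Hxt : x * t <= X * t) by (apply Rmult_le_compat_r; lra).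
  assert (Hyp2 : Rabs yp * Rabs yp <= x * X * t ^ 2).
  { replace (x * X * t ^ 2) with (x * t * (X * t)) by ring.
    apply Rmult_le_compat; auto using Rabs_pos; lra. }
  assert (Hypq : Rabs yp * Rabs yq <= x * X * t ^ 2).
  { replace (x * X * t ^ 2) with (x * t * (X * t)) by ring.
    apply Rmult_le_compat; auto using Rabs_pos. }
  assert (Hcross : - (yq * yp) <= Rabs yp * Rabs yq).
  { rewrite <- Rabs_mult, Rmult_comm, <- Rabs_Ropp. apply Rle_abs. }
  assert (yp ^ 2 = Rabs yp * Rabs yp) by (rewrite <- (pow2_abs yp); ring).
  nra.
Qed.

Lemma cone_shear_bound : Rabs shear <= 2 + x * X * t.
Proof.
  assert (Hxyq : Rabs (x * yq) <= x * X * t).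
  { rewrite Rabs_mult, (Rabs_pos_eq x) by lra.
    replace (x * X * t) with (x * (X * t)) by ring.
    apply Rmult_le_compat_l; lra. }
  assert (Hypx : Rabs (yp * X) <= x * X * t).
  { rewrite Rabs_mult, (Rabs_pos_eq X) by lra.
    replace (x * X * t) with (x * t * X) by ring.
    apply Rmult_le_compat_r; lra. }
  apply Rabs_le_inv in Hxyq, Hypx, Hzp, Hzq.
  apply Rabs_le. unfold shear. lra.
Qed.

(* The bound [r >= X / alpha] turns the constant and quadratic parts of the
   shear into multiples of [x X]; this is where [a >= 6 (1 + alpha)] is used. *)
Lemma cone_shear_sq_scaled :
  (s * X) ^ 2 <= alpha ^ 2 ->
  s ^ 2 * shear ^ 2 <= x * X * (/ 4 + 2 * alpha ^ 2 * t ^ 2).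
Proof.
  intros HsX.
  assert (Hw : shear ^ 2 <= 8 + 2 * (x * X * t) ^ 2).
  { pose proof cone_shear_bound as Hb. apply Rabs_le_inv in Hb.
    assert (shear ^ 2 <= (2 + x * X * t) ^ 2).
    { assert (0 <= (2 + x * X * t - shear) * (2 + x * X * t + shear)) by
        (apply Rmult_le_pos; lra).
      nra. }
    pose proof (pow2_ge_0 (2 - x * X * t)). nra. }
  assert (Hconst : 8 * s ^ 2 <= x * X / 4).
  { assert (32 * alpha ^ 2 <= x * X * X ^ 2).
    { assert (36 * alpha ^ 2 <= x ^ 2) by nra.
      assert (1 <= x ^ 2) by nra.
      assert (x ^ 2 * x ^ 2 <= x * X * X ^ 2) by
        (assert (x ^ 2 <= x * X) by nra; assert (x ^ 2 <= X ^ 2) by nra; nra).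
      nra. }
    assert (0 < X ^ 2) by nra.
    apply (Rmult_le_reg_r (X ^ 2)); nra. }
  assert (Hquad : s ^ 2 * (x * X * t) ^ 2 <= x * X * (alpha ^ 2 * t ^ 2)).
  { assert (x ^ 2 * t ^ 2 * (s * X) ^ 2 <= x ^ 2 * t ^ 2 * alpha ^ 2) by
      (apply Rmult_le_compat_l; nra).
    assert (x ^ 2 * t ^ 2 * alpha ^ 2 <= x * X * t ^ 2 * alpha ^ 2).
    { assert (x ^ 2 <= x * X) by
        (assert (0 <= x * (X - x)) by (apply Rmult_le_pos; lra); nra).
      apply Rmult_le_compat_r; [nra|].
      apply Rmult_le_compat_r; [nra | assumption]. }
    nra. }
  assert (s ^ 2 * shear ^ 2 <= s ^ 2 * (8 + 2 * (x * X * t) ^ 2)) by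
    (apply Rmult_le_compat_l; nra).
  nra.
Qed.

Lemma cone_slope_sq : 3 * t ^ 2 + 2 * alpha ^ 2 * t ^ 2 <= 3 / 4.
Proof.
  assert (Hu : 0 <= t * (2 * (1 + alpha))) by (apply Rmult_le_pos; lra).
  assert (Hu2 : (t * (2 * (1 + alpha))) ^ 2 <= 1) by nra.
  assert (Hgap : 0 <= (6 * alpha + alpha ^ 2) * t ^ 2) by
    (apply Rmult_le_pos; nra).
  assert (3 * t ^ 2 + 2 * alpha ^ 2 * t ^ 2 + (6 * alpha + alpha ^ 2) * t ^ 2
          = 3 / 4 * (t * (2 * (1 + alpha))) ^ 2) by field.
  lra.
Qed.

Lemma cone_translate_in_Balpha :
  (s * X) ^ 2 + (s * yq) ^ 2 + (s ^ 2 * zq) ^ 2 <= alpha ^ 2 ->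
  (s * (X - x)) ^ 2 + (s * (yq - yp)) ^ 2 + (s ^ 2 * shear) ^ 2 <= alpha ^ 2.
Proof.
  intros HB.
  assert (HsX : (s * X) ^ 2 <= alpha ^ 2) by nra.
  pose proof cone_shift_x_sq. pose proof cone_shift_y_sq.
  pose proof (cone_shear_sq_scaled HsX). pose proof cone_slope_sq.
  assert (x * X * (3 * t ^ 2 + 2 * alpha ^ 2 * t ^ 2) <= x * X * (3 / 4)) by
    (apply Rmult_le_compat_l; nra).
  assert (Hsum : (X - x) ^ 2 + (yq - yp) ^ 2 + s ^ 2 * shear ^ 2 <= X ^ 2 + yq ^ 2)
    by nra.
  assert (s ^ 2 * ((X - x) ^ 2 + (yq - yp) ^ 2 + s ^ 2 * shear ^ 2)
          <= s ^ 2 * (X ^ 2 + yq ^ 2)) by (apply Rmult_le_compat_l; nra).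
  nra.
Qed.

End cone_estimate.

Lemma d_alpha_le_r_pt_in_cone (alpha a b theta : R) (p q : H) :
  0 < alpha -> 6 * (1 + alpha) <= a -> 0 < tan theta ->
  tan theta * (2 * (1 + alpha)) <= 1 -> b <= 1 ->
  in_P a b theta p -> in_P a b theta q -> xc p <= xc q ->
  d_alpha alpha p q <= r_pt alpha q.
Proof.
  intros Halpha Ha Ht Hslope Hb [Hxp [Hzp Hyp]] [Hxq [Hzq Hyq]] Hxpq.
  unfold r_pt, d_alpha. rewrite hmul_hinv_h0, hmul_hinv.
  apply Rinf_le_Rinf.
  - intros r [Hr _]. exact Hr.
  - apply in_Balpha_dil_exists, Halpha.
  - intros r [Hr HB]. split; [exact Hr|].
    destruct p as [xp yp zp], q as [xq yq zq].
    unfold in_Balpha, dil in *; cbn in *.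
    apply (cone_translate_in_Balpha alpha (tan theta)); lra.
Qed.

Lemma tan_lt_of_lt_atan (c theta : R) :
  0 < theta < atan c -> 0 < tan theta < c.
Proof.
  intros [H0 Hc]. destruct (atan_bound c) as [_ Hpi].
  split.
  - apply tan_gt_0; lra.
  - rewrite <- (tan_atan c). apply tan_increasing; lra.
Qed.

Theorem lemma2p3 (alpha : R) (halpha : 0 < alpha)
  (hdist : is_distance (d_alpha alpha)) :
  exists theta0 : R, 0 < theta0 < PI / 4 /\
    forall theta : R, 0 < theta < theta0 ->
      exists a0 : R, 1 <= a0 /\
        forall a b : R, a > a0 -> 0 < b < 1 ->
          forall p q : H,
            ~ in_ball alpha q (r_pt alpha q) p ->
            ~ in_ball alpha p (r_pt alpha p) q ->
            ~ (in_P a b theta p /\ in_P a b theta q).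
Proof.
  set (c := / (2 * (1 + alpha))).
  assert (Hc : 0 < c < 1).
  { unfold c. split; [apply Rinv_0_lt_compat; lra|].
    rewrite <- Rinv_1. apply Rinv_lt_contravar; lra. }
  exists (atan c). split.
  { rewrite <- atan_0, <- atan_1. split; apply atan_increasing; lra. }
  intros theta Htheta.
  destruct (tan_lt_of_lt_atan c theta Htheta) as [Ht Htc].
  assert (Hslope : tan theta * (2 * (1 + alpha)) <= 1).
  { assert (Hck : c * (2 * (1 + alpha)) = 1) by (unfold c; field; lra).
    assert (tan theta * (2 * (1 + alpha)) < c * (2 * (1 + alpha))) by
      (apply Rmult_lt_compat_r; lra).
    lra. }
  exists (6 * (1 + alpha)). split; [lra|].
  intros a b Ha Hb p q Hfarq Hfarp [Pp Pq].
  destruct (Rle_dec (xc p) (xc q)) as [Hle | Hgt].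
  - apply Hfarq, (d_alpha_le_r_pt_in_cone alpha a b theta); auto; lra.
  - apply Hfarp, (d_alpha_le_r_pt_in_cone alpha a b theta); auto; lra.
Qed.
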